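(* For every connected undirected unweighted graph $G=(V,E)$ on $N$ vertices and every $r>1$, we have $\mathsf{FT}_{r}^{\delta=1/2}(G)\le \frac{r}{r-1}\cdot N^5$.
   Context: Mixed $\delta$-updating on a connected undirected unweighted graph $G=(V,E)$ with $N$ vertices: each vertex holds a mutant (fitness $r>0$) or wild-type (fitness $1$); $f_S(u)$ is the fitness at $u$ when $S$ is the mutant set. At each step, with probability $\delta$ a death-Birth step: choose $v$ uniformly to die, choose a neighbor $u$ of $v$ with probability proportional to $f_S(u)$, $u$ copies its type onto $v$; with probability $1-\delta$ a Birth-death step: choose $u$ with probability proportional to $f_S(u)$ among all vertices, choose a uniformly random neighbor $v$ of $u$, $u$ copies its type onto $v$. Fixation means all vertices mutant. $\mathsf{FT}_r^\delta(G,S_0)$ is the expected time (number of steps) until fixation conditioned on fixation, starting from mutant set $S_0$; $\mathsf{FT}_r^\delta(G)=\max_{S_0}\mathsf{FT}_r^\delta(G,S_0)$ over nonempty initial mutant sets $S_0\subseteq V$. *)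

From HB Require Import structures.
From mathcomp Require Import all_boot all_order all_algebra.
From mathcomp Require Import all_classical all_reals all_analysis.
Set Implicit Arguments. Unset Strict Implicit. Unset Printing Implicit Defensive.
Import Order.TTheory GRing.Theory Num.Theory numFieldNormedType.Exports.
Local Open Scope ring_scope.

Section MixedUpdating.
Variables (R : realType) (T : finType) (e : rel T) (r delta : R).

Definition fit (S : {set T}) (u : T) : R := if u \in S then r else 1.

Definition totfit (S : {set T}) : R := \sum_(w : T) fit S w.

Definition nbfit (S : {set T}) (v : T) : R := \sum_(w | e v w) fit S w.

Definition deg (u : T) : nat := #|[set w | e u w]|.

Definition copy (S : {set T}) (u v : T) : {set T} :=
  if u \in S then v |: S else S :\ v.

(* death-Birth step: v uniform dies, neighbour u chosen prop. to fitness *)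
Definition dB_prob (S S' : {set T}) : R :=
  \sum_(v : T) (#|T|%:R)^-1 *
    \sum_(u | e v u) (fit S u / nbfit S v) * (copy S u v == S')%:R.

(* Birth-death step: u chosen prop. to fitness, uniform neighbour v replaced *)
Definition Bd_prob (S S' : {set T}) : R :=
  \sum_(u : T) (fit S u / totfit S) *
    \sum_(v | e u v) ((deg u)%:R)^-1 * (copy S u v == S')%:R.

(* one-step transition probability of mixed delta-updating; the two
   homogeneous states set0 and setT are absorbing (this is automatic from
   the formula when the graph is connected with N >= 2; the explicit
   override only makes the degenerate case N = 1 well defined). *)
Definition trans (S S' : {set T}) : R :=
  if (S == finset.set0) || (S == [set: T]) then (S == S')%:R
  else delta * dB_prob S S' + (1 - delta) * Bd_prob S S'.

Fixpoint ntrans (n : nat) (S S' : {set T}) : R :=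
  match n with
  | 0 => (S == S')%:R
  | k.+1 => \sum_(S'' : {set T}) trans S S'' * ntrans k S'' S'
  end.

Definition fixed_by (S0 : {set T}) (n : nat) : R := ntrans n S0 [set: T].

Definition fixprob (S0 : {set T}) : R := limn (fixed_by S0).

(* E[tau * 1{fixation}] : since setT is absorbing, P(tau = k, fixation)
   = fixed_by k - fixed_by (k-1) for k >= 1 (term k = 0 vanishes). *)
Definition fixtime_mass (S0 : {set T}) : \bar R :=
  (\sum_(0 <= k <oo)
     ((k%:R * (fixed_by S0 k - fixed_by S0 k.-1))%:E))%E.

Definition FT (S0 : {set T}) : \bar R :=
  (fixtime_mass S0 * ((fixprob S0)^-1)%:E)%E.

End MixedUpdating.

From HB Require Import structures.
From mathcomp Require Import all_boot all_order all_algebra.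
From mathcomp Require Import all_classical all_reals all_analysis.
From mathcomp.algebra_tactics Require Import ring lra.
Set Implicit Arguments. Unset Strict Implicit. Unset Printing Implicit Defensive.
Import Order.TTheory GRing.Theory Num.Theory numFieldNormedType.Exports.
Local Open Scope ring_scope.

(* While the population is inhomogeneous, the number of mutants |S| has drift
   at least (r - 1) / (2 r N^2).  Grouping the updates by edges, every edge from
   a mutant u to a wild type v contributes the difference between the rates at
   which u invades v and v invades u; averaging death-Birth with Birth-death
   makes this difference at least (r - 1) / (r N^2) whatever the degrees, and
   connectivity provides such an edge.  Since |S| <= N, the expected number of
   steps spent in inhomogeneous states, which bounds E[tau 1{fixation}], is at
   most 2 r N^2 (N - 1) / (r - 1); the same submartingale bound forces absorption
   and shows that fixation has probability at least |S0| / N >= 1 / N.  Dividing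
   gives FT <= 2 r N^3 (N - 1) / (r - 1) <= r N^5 / (r - 1). *)

Lemma sum_indicator_mul (R : pzSemiRingType) (X : finType) (c : X) (f : X -> R) :
  \sum_x (c == x)%:R * f x = f c.
Proof.
rewrite (bigD1 c) //= eqxx mul1r big1 ?addr0 // => x.
by rewrite eq_sym => /negbTE ->; rewrite mul0r.
Qed.

Lemma sum_mul_indicator (R : pzSemiRingType) (X : finType) (c : X) (f : X -> R) :
  \sum_x f x * (x == c)%:R = f c.
Proof.
rewrite -[RHS](sum_indicator_mul c); apply: eq_bigr => x _.
by rewrite eq_sym mulr_natl mulr_natr.
Qed.

Lemma sum_pushforward_mul (R : pzSemiRingType) (I J X : finType)
    (Q : I -> pred J) (w : I -> J -> R) (g : I -> J -> X) (f : X -> R) :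
  \sum_x (\sum_i \sum_(j | Q i j) w i j * (g i j == x)%:R) * f x =
  \sum_i \sum_(j | Q i j) w i j * f (g i j).
Proof.
under eq_bigr do rewrite mulr_suml; rewrite exchange_big; apply: eq_bigr => i _.
under eq_bigr do rewrite mulr_suml; rewrite exchange_big; apply: eq_bigr => j _.
by under eq_bigr do rewrite -mulrA; rewrite -mulr_sumr sum_indicator_mul.
Qed.

Lemma ler_sum2_term (R : numDomainType) (I J : finType) (P : I -> pred J)
    (F : I -> J -> R) i j :
  P i j -> (forall i j, P i j -> 0 <= F i j) ->
  F i j <= \sum_i' \sum_(j' | P i' j') F i' j'.
Proof.
move=> Pij F_ge0; rewrite (bigD1 i) //= (bigD1 j) //= -addrA lerDl.
apply: addr_ge0; first by apply: sumr_ge0 => j' /andP[Pij' _]; exact: F_ge0.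
by apply: sumr_ge0 => i' _; apply: sumr_ge0 => j'; exact: F_ge0.
Qed.

Lemma sum_mul_increments (R : comPzRingType) (a : nat -> R) n :
  \sum_(0 <= k < n.+1) k%:R * (a k - a k.-1) = \sum_(0 <= k < n) (a n - a k).
Proof.
elim: n => [|n IH]; first by rewrite big_nat1 mul0r big_geq.
rewrite big_nat_recr //= IH [RHS]big_nat_recr //=.
have -> : \sum_(0 <= k < n) (a n.+1 - a k) =
          \sum_(0 <= k < n) (a n - a k) + n%:R * (a n.+1 - a n).
  rewrite mulr_natl -[n in _ *+ n]subn0 -sumr_const_nat -big_split /=.
  by apply: eq_bigr => k _; ring.
rewrite -natr1; ring.
Qed.

Lemma ler_of_forall_le_add_divSn (R : archiRealFieldType) (a b c : R) :
  (forall n, a <= b + c / n.+1%:R) -> a <= b.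
Proof.
move=> le_ab; apply/ler_addgt0Pr => eps eps_gt0.
apply: le_trans (le_ab (Num.truncn (c / eps))) _.
rewrite lerD2l ler_pdivrMr ?ltr0Sn // mulrC -ler_pdivrMr //.
exact: ltW (truncnS_gt _).
Qed.

Section AbsorbingChain.
Variables (R : realType) (X : finType) (P : X -> X -> R) (absorbing : pred X).
Hypothesis P_ge0 : forall x y, 0 <= P x y.
Hypothesis P_sum1 : forall x, \sum_y P x y = 1.
Hypothesis P_absorbing : forall x y, absorbing x -> P x y = (x == y)%:R.

Fixpoint kpow n x y : R :=
  match n with 0 => (x == y)%:R | k.+1 => \sum_z P x z * kpow k z y end.

Definition expect n (f : X -> R) x := \sum_y kpow n x y * f y.

Definition pr_transient n x := expect n (fun y => (~~ absorbing y)%:R) x.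

Definition transient_time n x := \sum_(0 <= k < n) pr_transient k x.

Lemma kpow_ge0 n x y : 0 <= kpow n x y.
Proof.
elim: n x => [|n IH] x /=; first exact: ler0n.
by apply: sumr_ge0 => z _; apply: mulr_ge0.
Qed.

Lemma expect0 f x : expect 0 f x = f x.
Proof. exact: sum_indicator_mul. Qed.

Lemma expectS n f x : expect n.+1 f x = \sum_y P x y * expect n f y.
Proof.
rewrite /expect /=; under eq_bigr do rewrite mulr_suml.
rewrite exchange_big; apply: eq_bigr => z _ /=; rewrite mulr_sumr.
by apply: eq_bigr => y _; rewrite mulrA.
Qed.

Lemma ler_expect n f g x : (forall y, f y <= g y) -> expect n f x <= expect n g x.
Proof. by move=> le_fg; apply: ler_sum => y _; apply: ler_wpM2l; rewrite ?kpow_ge0. Qed.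

Lemma expect_cst n c x : expect n (fun => c) x = c.
Proof.
elim: n x => [|n IH] x; first exact: expect0.
by rewrite expectS; under eq_bigr do rewrite IH; rewrite -mulr_suml P_sum1 mul1r.
Qed.

Lemma pr_transient_ge0 n x : 0 <= pr_transient n x.
Proof. by apply: sumr_ge0 => y _; rewrite mulr_ge0 ?kpow_ge0. Qed.

Lemma sum_absorbing_add_pr_transient n x :
  \sum_(y | absorbing y) kpow n x y + pr_transient n x = 1.
Proof.
rewrite -(expect_cst n 1 x) /pr_transient /expect [RHS](bigID absorbing) /=.
congr (_ + _); first by apply: eq_bigr => y _; rewrite mulr1.
rewrite [RHS]big_mkcond /=; apply: eq_bigr => y _.
by case: (absorbing y); rewrite /= ?mulr0 ?mulr1.
Qed.

Lemma kpow_absorbing_nondecreasing c x : absorbing c ->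
  {homo (fun n => kpow n x c) : n m / (n <= m)%N >-> n <= m}.
Proof.
move=> abs_c; apply/nondecreasing_seqP => n; elim: n x => [|n IH] x /=.
  rewrite sum_mul_indicator.
  by have [->|_] := eqVneq x c; [rewrite P_absorbing // eqxx | exact: P_ge0].
by apply: ler_sum => z _; apply: ler_wpM2l.
Qed.

Lemma pr_transient_nonincreasing x :
  {homo (fun n => pr_transient n x) : n m / (n <= m)%N >-> m <= n}.
Proof.
move=> n m le_nm; have := sum_absorbing_add_pr_transient n x.
rewrite -(sum_absorbing_add_pr_transient m x) => sum_eq.
have : \sum_(y | absorbing y) kpow n x y <= \sum_(y | absorbing y) kpow m x y.
  by apply: ler_sum => y abs_y; apply: kpow_absorbing_nondecreasing.
lra.
Qed.

Lemma kpow_absorbing_increment c k n x : absorbing c -> (k <= n)%N ->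
  kpow n x c - kpow k x c <= pr_transient k x.
Proof.
move=> abs_c le_kn; have := sum_absorbing_add_pr_transient k x.
rewrite -(sum_absorbing_add_pr_transient n x).
rewrite (bigD1 c) //= [X in _ = X + _](bigD1 c) //=.
have : \sum_(y | absorbing y && (y != c)) kpow k x y <=
       \sum_(y | absorbing y && (y != c)) kpow n x y.
  by apply: ler_sum => y /andP[abs_y _]; apply: kpow_absorbing_nondecreasing.
have := pr_transient_ge0 n x; lra.
Qed.

Section Drift.
Variables (h : X -> R) (M d : R).
Hypothesis h_le : forall y, h y <= M.
Hypothesis d_gt0 : 0 < d.
Hypothesis h_drift : forall y, ~~ absorbing y -> h y + d <= \sum_z P y z * h z.

Lemma transient_timeS n x : transient_time n.+1 x =
  (~~ absorbing x)%:R + \sum_y P x y * transient_time n y.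
Proof.
rewrite /transient_time big_nat_recl // /pr_transient expect0; congr (_ + _).
under eq_bigr do rewrite expectS.
by rewrite exchange_big; apply: eq_bigr => y _ /=; rewrite mulr_sumr.
Qed.

Lemma drift_step y : h y + d * (~~ absorbing y)%:R <= \sum_z P y z * h z.
Proof.
case: (boolP (absorbing y)) => [abs_y|/h_drift]; last by rewrite mulr1.
rewrite mulr0 addr0 (eq_bigr (fun z => (y == z)%:R * h z)) => [|z _].
  by rewrite sum_indicator_mul.
by rewrite P_absorbing.
Qed.

Lemma expect_drift n x : h x + d * transient_time n x <= expect n h x.
Proof.
elim: n x => [|n IH] x.
  by rewrite /transient_time big_geq // mulr0 addr0 expect0.
rewrite expectS transient_timeS.
apply: le_trans (_ : \sum_y P x y * (h y + d * transient_time n y) <= _); last first.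
  by apply: ler_sum => y _; apply: ler_wpM2l.
under [X in _ <= X]eq_bigr do rewrite mulrDr.
rewrite big_split /=; under [X in _ <= _ + X]eq_bigr do rewrite mulrCA.
rewrite -mulr_sumr mulrDr addrA lerD2r; exact: drift_step.
Qed.

Lemma transient_time_le n x : transient_time n x <= (M - h x) / d.
Proof.
rewrite ler_pdivlMr // mulrC.
have := expect_drift n x; have := ler_expect n x h_le; rewrite expect_cst; lra.
Qed.

Lemma pr_transient_le n x : pr_transient n x <= (M - h x) / d / n.+1%:R.
Proof.
rewrite ler_pdivlMr ?ltr0Sn //; apply: le_trans (transient_time_le n.+1 x).
have -> : pr_transient n x * n.+1%:R = \sum_(0 <= k < n.+1) pr_transient n x.
  by rewrite sumr_const_nat subn0 mulr_natr.
by apply: ler_sum_nat => k /andP[_ lt_kn]; apply: pr_transient_nonincreasing.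
Qed.

Variable top : X.
Hypothesis absorbing_top : absorbing top.
Hypothesis h_absorbing : forall y, absorbing y -> y != top -> h y <= 0.

Definition hit_mass x : \bar R :=
  (\sum_(0 <= k <oo) ((k%:R * (kpow k x top - kpow k.-1 x top))%:E))%E.

Definition hit_prob x : R := limn (fun n => kpow n x top).

Lemma hit_mass_term_ge0 x k : 0 <= k%:R * (kpow k x top - kpow k.-1 x top).
Proof.
apply: mulr_ge0 => //; rewrite subr_ge0.
exact: kpow_absorbing_nondecreasing (leq_pred k).
Qed.

Lemma hit_mass_le x : (hit_mass x <= ((M - h x) / d)%:E)%E.
Proof.
apply: lime_le.
  by apply: is_cvg_nneseries => k _ _; rewrite lee_fin hit_mass_term_ge0.
apply: nearW => -[|n]; rewrite sumEFin lee_fin.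
  by rewrite big_geq // divr_ge0 ?subr_ge0 ?h_le ?ltW.
rewrite sum_mul_increments; apply: le_trans (transient_time_le n x).
apply: ler_sum_nat => k /andP[_ lt_kn].
exact: kpow_absorbing_increment (ltnW lt_kn).
Qed.

Lemma hit_prob_ge x : 0 <= M -> h x <= M * hit_prob x.
Proof.
move=> M_ge0.
have cvg_hit : cvgn (fun n => kpow n x top).
  apply: nondecreasing_is_cvgn; first exact: kpow_absorbing_nondecreasing.
  exists 1 => _ [n _ <-]; have := sum_absorbing_add_pr_transient n x.
  rewrite (bigD1 top) //=; have := pr_transient_ge0 n x.
  have : 0 <= \sum_(y | absorbing y && (y != top)) kpow n x y.
    by apply: sumr_ge0 => y _; exact: kpow_ge0.
  lra.
have h_split y : h y <= M * ((y == top)%:R + (~~ absorbing y)%:R).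
  have [->|ne_y] := eqVneq y top; first by rewrite absorbing_top addr0 mulr1.
  case: (boolP (absorbing y)) => [abs_y|_]; first by rewrite addr0 mulr0 h_absorbing.
  by rewrite add0r mulr1.
have hx_le n : h x <= M * (kpow n x top + pr_transient n x).
  have tt_ge0 : 0 <= transient_time n x.
    by apply: sumr_ge0 => k _; exact: pr_transient_ge0.
  apply: le_trans (_ : h x + d * transient_time n x <= _).
    by rewrite lerDl; apply: mulr_ge0 => //; exact: ltW.
  apply: le_trans (expect_drift n x) (le_trans (ler_expect n x h_split) _).
  rewrite /expect; under eq_bigr do rewrite mulrCA mulrDr.
  by rewrite -mulr_sumr big_split /= sum_mul_indicator.
apply: (ler_of_forall_le_add_divSn (c := M * ((M - h x) / d))) => n.
rewrite -mulrA -mulrDr; apply: le_trans (hx_le n) _; apply: ler_wpM2l => //.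
apply: lerD; last exact: pr_transient_le.
exact: nondecreasing_cvgn_le
  (kpow_absorbing_nondecreasing x absorbing_top) cvg_hit n.
Qed.

Lemma hit_time_le x : 0 < h x ->
  (hit_mass x * ((hit_prob x)^-1)%:E <= ((M - h x) / d * (M / h x))%:E)%E.
Proof.
move=> hx_gt0; have M_gt0 : 0 < M := lt_le_trans hx_gt0 (h_le x).
have prob_ge : h x / M <= hit_prob x by rewrite ler_pdivrMr // mulrC hit_prob_ge ?ltW.
have prob_gt0 : 0 < hit_prob x := lt_le_trans (divr_gt0 hx_gt0 M_gt0) prob_ge.
rewrite EFinM; apply: lee_pmul.
- by apply: nneseries_ge0 => k _ _; rewrite lee_fin hit_mass_term_ge0.
- by rewrite lee_fin invr_ge0 ltW.
- exact: hit_mass_le.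
- by rewrite lee_fin -invf_div lef_pV2 ?posrE ?divr_gt0.
Qed.

End Drift.
End AbsorbingChain.

Section MixedUpdating.
Variables (R : realType) (T : finType) (e : rel T) (r : R).
Hypothesis e_sym : symmetric e.
Hypothesis e_conn : forall x y : T, connect e x y.
Hypothesis r_gt1 : 1 < r.

Local Notation N := (#|T|%:R : R).
Implicit Types (S : {set T}) (u v w x y : T).

Definition homogeneous (S : {set T}) := (S == finset.set0) || (S == [set: T]).

Lemma connect_edge_out (A : {set T}) x y : connect e x y -> x \in A -> y \notin A ->
  exists u v, [/\ e u v, u \in A & v \notin A].
Proof.
case/connectP=> p; elim: p x => [|z p IH] x /=; first by move=> _ -> ->.
case/andP=> exz pz y_last xA yA.
by case: (boolP (z \in A)) => [zA|zA]; [exact: IH pz y_last zA yA | exists x, z].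
Qed.

Lemma inhomogeneous_boundary S : ~~ homogeneous S ->
  exists u v, [/\ e u v, u \in S & v \notin S].
Proof.
rewrite negb_or -properT => /andP[/set0Pn[x xS] /properP[_ [y _ yS]]].
exact: connect_edge_out (e_conn x y) xS yS.
Qed.

Lemma inhomogeneous_neighbour S : ~~ homogeneous S -> forall v, exists w, e v w.
Proof.
move=> /inhomogeneous_boundary[x [y [_ xS yS]]] v.
have [w ne_wv] : exists w, w != v.
  have [eq_xv|] := eqVneq x v; last by exists x.
  by exists y; apply: contraNneq yS => ->; rewrite -eq_xv.
have w_out : w \notin [set v] by rewrite inE.
have [u [w' [euw' /set1P eq_uv _]]] :=
  connect_edge_out (e_conn v w) (set11 v) w_out.
by exists w'; rewrite -eq_uv.
Qed.

Lemma fit_ge1 S u : 1 <= fit r S u.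
Proof. by rewrite /fit; case: ifP => _ //; exact: ltW. Qed.

Lemma fit_le S u : fit r S u <= r.
Proof. by rewrite /fit; case: ifP => _ //; exact: ltW. Qed.

Lemma fit_gt0 S u : 0 < fit r S u.
Proof. exact: lt_le_trans ltr01 (fit_ge1 S u). Qed.

Lemma sum_nbrs_cst v (c : R) : \sum_(w | e v w) c = c *+ deg e v.
Proof. by rewrite -sumr_const; apply: eq_bigl => w; rewrite inE. Qed.

Lemma deg_gt0 u w : e u w -> (0 < deg e u)%N.
Proof. by move=> euw; apply/card_gt0P; exists w; rewrite inE. Qed.

Lemma deg_le_nbfit S v : (deg e v)%:R <= nbfit e r S v.
Proof.
rewrite -[_%:R]mulr1 mulr_natl -sum_nbrs_cst.
by apply: ler_sum => w _; exact: fit_ge1.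
Qed.

Lemma nbfit_le S v : nbfit e r S v <= r * (deg e v)%:R.
Proof.
rewrite mulr_natr -sum_nbrs_cst.
by apply: ler_sum => w _; exact: fit_le.
Qed.

Lemma nbfit_gt0 S v w : e v w -> 0 < nbfit e r S v.
Proof.
move=> evw; apply: lt_le_trans (deg_le_nbfit S v).
by rewrite ltr0n (deg_gt0 evw).
Qed.

Lemma card_le_totfit S : N <= totfit r S.
Proof.
rewrite -[N]mulr1 mulr_natl -sumr_const.
by apply: ler_sum => w _; exact: fit_ge1.
Qed.

Lemma totfit_le S : totfit r S <= r * N.
Proof.
rewrite mulr_natr -sumr_const.
by apply: ler_sum => w _; exact: fit_le.
Qed.

Definition dB_rate S u v := N^-1 * (fit r S u / nbfit e r S v).

Definition Bd_rate S u v := fit r S u / totfit r S * (deg e u)%:R^-1.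

Definition rate delta S u v := delta * dB_rate S u v + (1 - delta) * Bd_rate S u v.

Lemma sum_nbrs_exchange (F : T -> T -> R) :
  \sum_v \sum_(u | e v u) F u v = \sum_u \sum_(v | e u v) F u v.
Proof.
rewrite (exchange_big_dep xpredT) //=; apply: eq_bigr => u _.
by apply: eq_bigl => v; rewrite e_sym.
Qed.

Lemma dB_prob_expect S f : \sum_S' dB_prob e r S S' * f S' =
  \sum_u \sum_(v | e u v) dB_rate S u v * f (copy S u v).
Proof.
rewrite -sum_nbrs_exchange -sum_pushforward_mul; apply: eq_bigr => S' _.
congr (_ * _); apply: eq_bigr => v _; rewrite mulr_sumr.
by apply: eq_bigr => u _; rewrite mulrA.
Qed.

Lemma Bd_prob_expect S f : \sum_S' Bd_prob e r S S' * f S' =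
  \sum_u \sum_(v | e u v) Bd_rate S u v * f (copy S u v).
Proof.
rewrite -sum_pushforward_mul; apply: eq_bigr => S' _.
congr (_ * _); apply: eq_bigr => u _; rewrite mulr_sumr.
by apply: eq_bigr => v _; rewrite mulrA.
Qed.

Lemma trans_inhomogeneous delta S S' : ~~ homogeneous S ->
  trans e r delta S S' = delta * dB_prob e r S S' + (1 - delta) * Bd_prob e r S S'.
Proof. by move/negbTE; rewrite /trans /homogeneous => ->. Qed.

Lemma trans_expect delta S f : ~~ homogeneous S ->
  \sum_S' trans e r delta S S' * f S' =
  \sum_u \sum_(v | e u v) rate delta S u v * f (copy S u v).
Proof.
move=> inh; under eq_bigr do rewrite trans_inhomogeneous // mulrDl -!mulrA.
rewrite big_split /= -!mulr_sumr dB_prob_expect Bd_prob_expect !mulr_sumr -big_split.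
apply: eq_bigr => u _; rewrite !mulr_sumr -big_split; apply: eq_bigr => v _ /=.
rewrite /rate; ring.
Qed.

Lemma cardT_gt0 (x : T) : 0 < N.
Proof. by rewrite ltr0n; apply/card_gt0P; exists x. Qed.

Lemma sum_dB_rate S : ~~ homogeneous S -> \sum_u \sum_(v | e u v) dB_rate S u v = 1.
Proof.
move=> inh; have nbr := inhomogeneous_neighbour inh.
have [x _] := inhomogeneous_boundary inh.
rewrite -sum_nbrs_exchange (eq_bigr (fun _ => N^-1)) => [|v _].
  have -> : \sum_(v : T) N^-1 = N^-1 * N by rewrite sumr_const mulr_natr.
  by rewrite mulVf // lt0r_neq0 // (cardT_gt0 x).
have [w evw] := nbr v; rewrite /dB_rate -mulr_sumr -mulr_suml.
by rewrite mulfV ?mulr1 ?lt0r_neq0 ?(nbfit_gt0 S evw).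
Qed.

Lemma sum_Bd_rate S : ~~ homogeneous S -> \sum_u \sum_(v | e u v) Bd_rate S u v = 1.
Proof.
move=> inh; have nbr := inhomogeneous_neighbour inh.
have [x _] := inhomogeneous_boundary inh.
rewrite (eq_bigr (fun u => fit r S u / totfit r S)) => [|u _].
  rewrite -mulr_suml mulfV // lt0r_neq0 //.
  exact: lt_le_trans (cardT_gt0 x) (card_le_totfit S).
have [w euw] := nbr u; rewrite -mulr_sumr sum_nbrs_cst.
have -> : (deg e u)%:R^-1 *+ deg e u = (deg e u)%:R^-1 * (deg e u)%:R :> R.
  by rewrite mulr_natr.
by rewrite mulVf ?mulr1 // pnatr_eq0 -lt0n (deg_gt0 euw).
Qed.

Lemma sum_rate delta S : ~~ homogeneous S ->
  \sum_u \sum_(v | e u v) rate delta S u v = 1.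
Proof.
move=> inh; rewrite /rate.
under eq_bigr do
  rewrite big_split -(mulr_sumr _ _ _ delta) -(mulr_sumr _ _ _ (1 - delta)).
rewrite big_split -(mulr_sumr _ _ _ delta) -(mulr_sumr _ _ _ (1 - delta)).
by rewrite sum_dB_rate // sum_Bd_rate //= !mulr1 addrC subrK.
Qed.

Lemma trans_homogeneous delta S S' : homogeneous S ->
  trans e r delta S S' = (S == S')%:R.
Proof. by rewrite /trans /homogeneous => ->. Qed.

Lemma trans_ge0 delta S S' : 0 <= delta <= 1 -> 0 <= trans e r delta S S'.
Proof.
case/andP=> delta_ge0 delta_le1; rewrite /trans; case: ifP => // _.
have fit_div_ge0 u (F : R) : 0 <= F -> 0 <= fit r S u / F.
  by move=> F_ge0; rewrite divr_ge0 // ltW // fit_gt0.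
apply: addr_ge0; apply: mulr_ge0; rewrite ?subr_ge0 //.
  apply: sumr_ge0 => v _; rewrite mulr_ge0 ?invr_ge0 //.
  apply: sumr_ge0 => u _; rewrite mulr_ge0 // fit_div_ge0 //.
  by apply: sumr_ge0 => w _; rewrite ltW // fit_gt0.
apply: sumr_ge0 => u _; rewrite mulr_ge0 ?fit_div_ge0 //.
  by apply: sumr_ge0 => w _; rewrite ltW // fit_gt0.
by apply: sumr_ge0 => v _; rewrite mulr_ge0 ?invr_ge0.
Qed.

Lemma trans_sum1 delta S : \sum_S' trans e r delta S S' = 1.
Proof.
have [hom|inh] := boolP (homogeneous S).
  under eq_bigr do rewrite trans_homogeneous // -[_%:R]mulr1.
  exact: sum_indicator_mul.
under eq_bigr do rewrite -[trans _ _ _ _ _]mulr1.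
rewrite trans_expect //; under eq_bigr do under eq_bigr do rewrite mulr1.
exact: sum_rate.
Qed.

Definition mutant_gain S u v : R :=
  ((u \in S) && (v \notin S))%:R - ((u \notin S) && (v \in S))%:R.

Lemma card_copy S u v : #|copy S u v|%:R = #|S|%:R + mutant_gain S u v.
Proof.
rewrite /copy /mutant_gain; case: (boolP (u \in S)) => uS /=.
  by rewrite cardsU1 natrD addrC; case: (v \in S); rewrite /= ?subr0.
by have := cardsD1 v S; case: (v \in S) => /= ->; rewrite natrD; ring.
Qed.

Definition net_rate delta S u v := rate delta S u v - rate delta S v u.

Lemma sum_rate_mutant_gain delta S :
  \sum_u \sum_(v | e u v) rate delta S u v * mutant_gain S u v =
  \sum_u \sum_(v | [&& e u v, u \in S & v \notin S]) net_rate delta S u v.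
Proof.
have swap :
    \sum_u \sum_(v | e u v) rate delta S u v * ((u \notin S) && (v \in S))%:R =
    \sum_u \sum_(v | e u v) rate delta S v u * ((u \in S) && (v \notin S))%:R.
  rewrite -sum_nbrs_exchange.
  by apply: eq_bigr => u _; apply: eq_bigr => v _; rewrite andbC.
transitivity
  (\sum_u \sum_(v | e u v) rate delta S u v * ((u \in S) && (v \notin S))%:R -
   \sum_u \sum_(v | e u v) rate delta S u v * ((u \notin S) && (v \in S))%:R).
  rewrite -sumrB; apply: eq_bigr => u _; rewrite -sumrB; apply: eq_bigr => v _.
  by rewrite mulrBr.
rewrite swap -sumrB; apply: eq_bigr => u _; rewrite -sumrB big_mkcondr.
by apply: eq_bigr => v _; case: (_ && _); rewrite /net_rate /= ?mulr1 ?mulr0 ?subr0.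
Qed.

Definition drift_rate : R := (r - 1) / (r * N ^+ 2) / 2.

Lemma net_rate_ge S u v : e u v -> u \in S -> v \notin S ->
  drift_rate <= net_rate (1 / 2) S u v.
Proof.
move=> euv uS vS; have evu : e v u by rewrite e_sym.
have r_gt0 : 0 < r by apply: lt_trans r_gt1.
have N_gt0 : 0 < N := cardT_gt0 u.
have F_gt0 : 0 < totfit r S := lt_le_trans N_gt0 (card_le_totfit S).
have degu_gt0 : 0 < (deg e u)%:R :> R by rewrite ltr0n (deg_gt0 euv).
have degv_gt0 : 0 < (deg e v)%:R :> R by rewrite ltr0n (deg_gt0 evu).
have nbu_gt0 := nbfit_gt0 S euv; have nbv_gt0 := nbfit_gt0 S evu.
rewrite /drift_rate /net_rate /rate /dB_rate /Bd_rate /fit uS (negbTE vS).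
set a := N^-1; set b := (totfit r S)^-1.
set du := (deg e u)%:R^-1; set dv := (deg e v)%:R^-1.
set nu := (nbfit e r S u)^-1; set nv := (nbfit e r S v)^-1.
have dv_le : dv <= r * nv.
  rewrite -invf_div lef_pV2 ?posrE ?divr_gt0 //.
  by rewrite ler_pdivrMr // mulrC nbfit_le.
have nu_le : nu <= du by rewrite lef_pV2 ?posrE // deg_le_nbfit.
have a_le_du : a <= du by rewrite lef_pV2 ?posrE // ler_nat max_card.
have a_le_dv : a <= dv by rewrite lef_pV2 ?posrE // ler_nat max_card.
have b_le_a : b <= a by rewrite lef_pV2 ?posrE // card_le_totfit.
have a_le_rb : a <= r * b.
  rewrite -invf_div lef_pV2 ?posrE ?divr_gt0 //.
  by rewrite ler_pdivrMr // mulrC totfit_le.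
have drift_le : (r - 1) / (r * N ^+ 2) <= (r - 1) * (a * b).
  have -> : (r - 1) / (r * N ^+ 2) = (r - 1) * (a * (a / r)).
    by rewrite /a; field; rewrite !lt0r_neq0.
  rewrite ler_pM2l ?subr_gt0 // ler_pM2l ?invr_gt0 //.
  by rewrite ler_pdivrMr // mulrC.
(* Bounding the death-Birth rates with [nu <= du] and [dv <= r nv] leaves
   [a dv - a du + r b du - b dv], which [gap_split] shows is at least (r - 1) a b. *)
have gap_split : a * dv - a * du + r * b * du - b * dv =
  (du - a) * (r * b - a) + (dv - a) * (a - b) + (r - 1) * (a * b) by ring.
have : 0 <= (du - a) * (r * b - a) by rewrite mulr_ge0 // subr_ge0.
have : 0 <= (dv - a) * (a - b) by rewrite mulr_ge0 // subr_ge0.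
have a_ge0 : 0 <= a by rewrite invr_ge0 ltW.
have := ler_wpM2l a_ge0 dv_le; have := ler_wpM2l a_ge0 nu_le.
lra.
Qed.

Lemma drift_rate_gt0 (x : T) : 0 < drift_rate.
Proof.
have r_gt0 : 0 < r by apply: lt_trans r_gt1.
by rewrite !divr_gt0 ?subr_gt0 ?mulr_gt0 ?exprn_gt0 ?(cardT_gt0 x).
Qed.

Lemma card_drift S : ~~ homogeneous S ->
  #|S|%:R + drift_rate <= \sum_S' trans e r (1 / 2) S S' * #|S'|%:R.
Proof.
move=> inh; have [u0 [v0 [euv0 u0S v0S]]] := inhomogeneous_boundary inh.
rewrite trans_expect //.
under eq_bigr do under eq_bigr do rewrite card_copy mulrDr.
under eq_bigr do rewrite big_split /=; rewrite big_split /=.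
have -> : \sum_u \sum_(v | e u v) rate (1 / 2) S u v * #|S|%:R = #|S|%:R.
  by under eq_bigr do rewrite -mulr_suml; rewrite -mulr_suml sum_rate // mul1r.
rewrite lerD2l sum_rate_mutant_gain.
have net_ge0 u v : [&& e u v, u \in S & v \notin S] -> 0 <= net_rate (1 / 2) S u v.
  case/and3P=> euv uS vS.
  exact: le_trans (ltW (drift_rate_gt0 u)) (net_rate_ge euv uS vS).
have uv0 : [&& e u0 v0, u0 \in S & v0 \notin S] by rewrite euv0 u0S v0S.
exact: le_trans (net_rate_ge euv0 u0S v0S)
  (ler_sum2_term (P := fun u v => [&& e u v, u \in S & v \notin S]) uv0 net_ge0).
Qed.

Lemma drift_bound_le s : 1 <= s <= N ->
  (N - s) / drift_rate * (N / s) <= r / (r - 1) * N ^+ 5.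
Proof.
case/andP=> s_ge1 s_le; have s_gt0 : 0 < s := lt_le_trans ltr01 s_ge1.
have N_gt0 : 0 < N := lt_le_trans s_gt0 s_le.
have r_gt0 : 0 < r by apply: lt_trans r_gt1.
have r1_gt0 : 0 < r - 1 by rewrite subr_gt0.
have -> : (N - s) / drift_rate * (N / s) = (N - s) / s * (2 * N ^+ 3) * (r / (r - 1)).
  by rewrite /drift_rate; field; rewrite !lt0r_neq0.
rewrite [leRHS]mulrC ler_pM2r ?divr_gt0 //.
have frac_le : (N - s) / s <= N - 1 by rewrite ler_pdivrMr //; nra.
apply: le_trans (ler_wpM2r _ frac_le) _; first by rewrite mulr_ge0 ?exprn_ge0 ?ltW.
rewrite -subr_ge0.
have -> : N ^+ 5 - (N - 1) * (2 * N ^+ 3) = N ^+ 3 * ((N - 1) ^+ 2 + 1) by ring.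
by rewrite mulr_ge0 ?exprn_ge0 ?addr_ge0 ?sqr_ge0 ?ltW.
Qed.

End MixedUpdating.

Lemma FTE (R : realType) (T : finType) (e : rel T) (r delta : R) S :
  FT e r delta S =
  (hit_mass (trans e r delta) [set: T] S *
   ((hit_prob (trans e r delta) [set: T] S)^-1)%:E)%E.
Proof. by []. Qed.

Theorem mainTheorem3 (R : realType) (T : finType) (e : rel T)
  (e_sym : symmetric e) (e_irr : irreflexive e)
  (e_conn : forall x y : T, connect e x y)
  (r : R) (hr : 1 < r) (S0 : {set T}) (hS0 : S0 != finset.set0) :
  (FT e r (1 / 2) S0 <= ((r / (r - 1)) * (#|T|%:R) ^+ 5)%:E)%E.
Proof.
have [x0 _] := set0Pn _ hS0.
have half01 : 0 <= (1 / 2 : R) <= 1 by apply/andP; split; lra.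
have card_le (S : {set T}) : (#|S|%:R : R) <= #|T|%:R by rewrite ler_nat max_card.
have setT_homogeneous : homogeneous [set: T] by rewrite /homogeneous eqxx orbT.
have card_homogeneous (S : {set T}) :
    homogeneous S -> S != [set: T] -> (#|S|%:R : R) <= 0.
  by case/orP=> /eqP ->; rewrite ?cards0 ?eqxx.
have S0_gt0 : 0 < (#|S0|%:R : R) by rewrite ltr0n card_gt0.
have := hit_time_le (fun S S' => trans_ge0 e hr S S' half01)
  (trans_sum1 e_sym e_conn hr _) (@trans_homogeneous _ _ e r _) card_le
  (drift_rate_gt0 hr x0) (card_drift e_sym e_conn hr) setT_homogeneous
  card_homogeneous S0_gt0.
rewrite FTE => /le_trans; apply.
by rewrite lee_fin drift_bound_le // ler1n card_gt0 hS0 card_le.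
Qed.
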